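(* Let $\Lambda=\{(W_j,\Lambda_j,v_j)\}_{j\in J}$ and $\Gamma=\{(V_j,\Gamma_j,v_j)\}_{j\in J}$ be g-fusion frames for $H$ with bounds $(A_1,B_1)$ and $(A_2,B_2)$ respectively, with g-fusion frame operators $S_\Lambda,S_\Gamma$, and let $\Lambda^\circ=\{(W_j^\circ,\Lambda_j^\circ,v_j)\}$ and $\Gamma^\circ=\{(V_j^\circ,\Gamma_j^\circ,v_j)\}$ be their canonical duals, i.e. $W_j^\circ=S_\Lambda^{-1}W_j$, $\Lambda_j^\circ=\Lambda_jP_{W_j}S_\Lambda^{-1}$, $V_j^\circ=S_\Gamma^{-1}V_j$, $\Gamma_j^\circ=\Gamma_jP_{V_j}S_\Gamma^{-1}$. If for some $D>0$ $$\Big|\sum_{j\in J}v_j^2\|\Lambda_jP_{W_j}f\|^2-\sum_{j\in J}v_j^2\|\Gamma_jP_{V_j}f\|^2\Big|\le D\|f\|^2\quad\forall f\in H,$$ then for all $f\in H$ $$\Big|\sum_{j\in J}v_j^2\|\Lambda_j^\circ P_{W_j^\circ}f\|^2-\sum_{j\in J}v_j^2\|\Gamma_j^\circ P_{V_j^\circ}f\|^2\Big|\le \frac{D}{A_1A_2}\|f\|^2.$$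
   Context: $H$ is a separable Hilbert space, $J$ a countable index set, $\{H_j\}_{j\in J}$ Hilbert spaces, and $P_W$ the orthogonal projection onto a closed subspace $W$. For closed subspaces $W_j\subseteq H$, weights $v_j>0$ and $\Lambda_j\in\mathcal{B}(H,H_j)$, $\{(W_j,\Lambda_j,v_j)\}_{j\in J}$ is a g-fusion frame with bounds $A,B$ if $0<A\le B<\infty$ and $A\|f\|^2\le\sum_j v_j^2\|\Lambda_jP_{W_j}f\|^2\le B\|f\|^2$ for all $f\in H$. Its g-fusion frame operator is $Sf=\sum_{j}v_j^2P_{W_j}\Lambda_j^*\Lambda_jP_{W_j}f$, which is bounded, self-adjoint, positive and invertible with $AI_H\le S\le BI_H$. *)

From HB Require Import structures.
From mathcomp Require Import all_boot all_order all_algebra.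
From mathcomp Require Import all_classical all_reals.
From mathcomp Require Import ereal esum.
From mathcomp Require complex.
Import complex.

Set Implicit Arguments.
Unset Strict Implicit.
Unset Printing Implicit Defensive.
Import Order.TTheory GRing.Theory Num.Theory.
Local Open Scope classical_set_scope.
Local Open Scope ring_scope.

Section Hilbert.
Variable R : realType.

Section Space.
Variable V : lmodType R[i].
Variable ip : V -> V -> R[i].

Definition nrm2 (f : V) : R := complex.Re (ip f f).
Definition nrm (f : V) : R := Num.sqrt (nrm2 f).

Definition is_inner_product : Prop :=
  (forall (a : R[i]) (x y z : V), ip (a *: x + y) z = a * ip x z + ip y z) /\
  (forall x y : V, ip y x = conjc (ip x y)) /\
  (forall x : V, 0 <= ip x x) /\
  (forall x : V, ip x x = 0 -> x = 0).

Definition cvg_to (u : nat -> V) (l : V) : Prop :=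
  forall e : R, 0 < e -> exists N : nat, forall n, (N <= n)%N -> nrm (u n - l) < e.

Definition complete_ip : Prop :=
  forall u : nat -> V,
    (forall e : R, 0 < e -> exists N : nat, forall m n,
        (N <= m)%N -> (N <= n)%N -> nrm (u m - u n) < e) ->
    exists l : V, cvg_to u l.

Definition is_hilbert : Prop := is_inner_product /\ complete_ip.

Definition separable : Prop :=
  exists u : nat -> V, forall (f : V) (e : R), 0 < e -> exists n, nrm (f - u n) < e.

Definition closed_subspace (W : set V) : Prop :=
  W 0 /\ (forall (a : R[i]) x y, W x -> W y -> W (a *: x + y)) /\
  (forall (u : nat -> V) (l : V), (forall n, W (u n)) -> cvg_to u l -> W l).

Definition oproj (W : set V) (f : V) : V :=
  xget 0 [set x | W x /\ forall w, W w -> ip (f - x) w = 0].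

(* unconditional convergence of a countable family of vectors:
   the net of finite partial sums converges to s *)
Definition hsum_to (J : choiceType) (F : J -> V) (s : V) : Prop :=
  forall e : R, 0 < e -> exists A0 : set J, finite_set A0 /\
    forall A : set J, finite_set A -> A0 `<=` A ->
      nrm (\sum_(j \in A) F j - s) < e.
End Space.

Definition bounded_op (U V : lmodType R[i]) (ipU : U -> U -> R[i])
    (ipV : V -> V -> R[i]) (T : U -> V) : Prop :=
  (forall (a : R[i]) x y, T (a *: x + y) = a *: T x + T y) /\
  exists M : R, forall f, nrm ipV (T f) <= M * nrm ipU f.

Definition adjoint (U V : lmodType R[i]) (ipU : U -> U -> R[i])
    (ipV : V -> V -> R[i]) (T : U -> V) (y : V) : U :=
  xget 0 [set x | forall f, ipV (T f) y = ipU f x].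

Definition finv (U : lmodType R[i]) (T : U -> U) (y : U) : U :=
  xget 0 [set x | T x = y].

Section GFusion.
Variables (J : countType) (H : lmodType R[i]) (ipH : H -> H -> R[i]).
Variables (K : J -> lmodType R[i]) (ipK : forall j, K j -> K j -> R[i]).

Definition gf_sum (W : J -> set H) (Lam : forall j, H -> K j) (v : J -> R)
    (f : H) : \bar R :=
  (\esum_(j in [set: J]) ((v j ^+ 2) * nrm2 (@ipK j) (Lam j (oproj ipH (W j) f)))%:E)%E.

Definition gfusion_frame (W : J -> set H) (Lam : forall j, H -> K j)
    (v : J -> R) (A B : R) : Prop :=
  0 < A /\ A <= B /\
  (forall j, closed_subspace ipH (W j)) /\
  (forall j, 0 < v j) /\
  (forall j, bounded_op ipH (@ipK j) (Lam j)) /\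
  (forall f : H, ((A * nrm2 ipH f)%:E <= gf_sum W Lam v f)%E /\
                 (gf_sum W Lam v f <= (B * nrm2 ipH f)%:E)%E).

Definition gf_op (W : J -> set H) (Lam : forall j, H -> K j) (v : J -> R)
    (f : H) : H :=
  xget 0 [set s | hsum_to ipH
    (fun j => real_complex R (v j ^+ 2) *:
       oproj ipH (W j) (adjoint ipH (@ipK j) (Lam j) (Lam j (oproj ipH (W j) f)))) s].

Definition dual_space (W : J -> set H) (Lam : forall j, H -> K j) (v : J -> R)
    (j : J) : set H :=
  finv (gf_op W Lam v) @` W j.

Definition dual_op (W : J -> set H) (Lam : forall j, H -> K j) (v : J -> R)
    (j : J) : H -> K j :=
  fun f => Lam j (oproj ipH (W j) (finv (gf_op W Lam v) f)).
End GFusion.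
End Hilbert.

From Pilot Require Import Defs.
From HB Require Import structures.
From mathcomp Require Import all_boot all_order all_algebra.
From mathcomp Require Import all_classical all_reals.
From mathcomp Require Import ereal esum.
From mathcomp Require complex.
From mathcomp Require Import ring lra.
Import complex.
Import Order.TTheory GRing.Theory Num.Theory.
Local Open Scope classical_set_scope.
Local Open Scope ring_scope.
Local Open Scope complex_scope.

Set Implicit Arguments.
Unset Strict Implicit.
Unset Printing Implicit Defensive.

(* Real and imaginary parts of R[i] (Num.Theory exports a different Re). *)
Local Notation Re := complex.Re.
Local Notation Im := complex.Im.

(* Write Q_Lam f = sum_j v_j^2 ||Lam_j P_{W_j} f||^2 for the frame form and
   S_Lam for the frame operator.  The frame form of the canonical dual is
   f |-> Re <f, S_Lam^{-1} f>, because P_{W_j} S^{-1} P_{S^{-1} W_j} = P_{W_j} S^{-1}.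
   With x = S_Lam^{-1} f and y = S_Gam^{-1} f this gives
     Q_Lam^o f - Q_Gam^o f = Re <S_Gam y, x> - Re <S_Lam y, x>,
   and polarizing Q_Lam - Q_Gam at A2 y +- A1 x (both of norm <= ||f||, by the
   lower frame bounds) bounds the right-hand side by D ||f||^2 / (A1 A2). *)

Section ComplexFacts.
Variable R : realType.
Implicit Types (a b : R[i]) (r : R).

Lemma ReD a b : Re (a + b) = Re a + Re b.
Proof. by case: a; case: b. Qed.
Lemma ReN a : Re (- a) = - Re a.
Proof. by case: a. Qed.
Lemma ReB a b : Re (a - b) = Re a - Re b.
Proof. by rewrite ReD ReN. Qed.
Lemma Re_realM r a : Re (r%:C * a) = r * Re a.
Proof. by case: a => x y /=; rewrite mul0r subr0. Qed.
Lemma Re_conj a : Re (conjc a) = Re a.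
Proof. by case: a. Qed.
Lemma Re_iM a : Re ('i * a) = - Im a.
Proof. by case: a => x y /=; rewrite !mul0r !mul1r sub0r. Qed.
Lemma conj_i : conjc ('i : R[i]) = - 'i.
Proof. by apply/eqP; rewrite eq_complex /= oppr0 !eqxx. Qed.

Lemma complex_ReIm a b : Re a = Re b -> Im a = Im b -> a = b.
Proof. by case: a; case: b => /= ? ? ? ? -> ->. Qed.

Lemma ge0_complex_real a : 0 <= a -> a = (Re a)%:C /\ 0 <= Re a.
Proof. by case: a => x y; rewrite lecE /= => /andP[/eqP -> h]. Qed.
End ComplexFacts.

Lemma subrBB (V : zmodType) (a b c : V) : (a - b) - (a - c) = c - b.
Proof. by rewrite opprB addrC addrA subrK. Qed.

Section LinearMaps.
Variables (R : realType) (U V : lmodType R[i]) (T : U -> V).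
Hypothesis linT : forall a x y, T (a *: x + y) = a *: T x + T y.

Lemma lin0 : T 0 = 0.
Proof. by have := linT 1 0 0; rewrite scaler0 addr0 scale1r -{1}[T 0]addr0 => /addrI. Qed.
Lemma linZ a x : T (a *: x) = a *: T x.
Proof. by rewrite -[a *: x]addr0 linT lin0 addr0. Qed.
Lemma linD x y : T (x + y) = T x + T y.
Proof. by rewrite -{1}[x]scale1r linT scale1r. Qed.
Lemma linN x : T (- x) = - T x.
Proof. by rewrite -scaleN1r linZ scaleN1r. Qed.
Lemma linB x y : T (x - y) = T x - T y.
Proof. by rewrite linD linN. Qed.
End LinearMaps.

Lemma quad_discr (R : realFieldType) (a b c : R) : 0 <= a -> 0 <= c ->
  (forall t, 2 * t * b <= t ^+ 2 * a + c) -> b ^+ 2 <= a * c.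
Proof.
move=> a0 c0 h; have [a0E|an0] := eqVneq a 0.
  suff -> : b = 0 by rewrite a0E expr2 !mul0r.
  apply/eqP; apply: contraT => bn0.
  by have := h ((c + 1) / b); rewrite a0E mulr0 add0r -mulrA divfK //; lra.
have ap : 0 < a by rewrite lt_def an0.
have := h (b / a).
have -> : (b / a) ^+ 2 * a = b ^+ 2 / a by field.
have -> : 2 * (b / a) * b = 2 * (b ^+ 2 / a) by field.
move=> hb; have : b ^+ 2 / a <= c by lra.
by rewrite ler_pdivrMr // mulrC.
Qed.

Section InnerProduct.
Variables (R : realType) (V : lmodType R[i]) (ip : V -> V -> R[i]).
Hypothesis hip : is_inner_product ip.

Local Notation rip x y := (Re (ip x y)).
Local Notation n2 := (nrm2 ip).

Lemma ipL a x y z : ip (a *: x + y) z = a * ip x z + ip y z.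
Proof. by case: hip. Qed.
Lemma ipC x y : ip y x = conjc (ip x y).
Proof. by case: hip => _ []. Qed.
Lemma ip_ge0 x : 0 <= ip x x.
Proof. by case: hip => _ [_ [h _]]; apply: h. Qed.
Lemma ip_eq0 x : ip x x = 0 -> x = 0.
Proof. by case: hip => _ [_ [_ h]]; apply: h. Qed.

Lemma ip0l z : ip 0 z = 0.
Proof. exact: (@lin0 _ _ R[i]^o (ip^~ z) (fun a x y => ipL a x y z)). Qed.
Lemma ipDl x y z : ip (x + y) z = ip x z + ip y z.
Proof. exact: (@linD _ _ R[i]^o (ip^~ z) (fun a x y => ipL a x y z)). Qed.
Lemma ipZl a x z : ip (a *: x) z = a * ip x z.
Proof. exact: (@linZ _ _ R[i]^o (ip^~ z) (fun a x y => ipL a x y z)). Qed.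
Lemma ipBl x y z : ip (x - y) z = ip x z - ip y z.
Proof. exact: (@linB _ _ R[i]^o (ip^~ z) (fun a x y => ipL a x y z)). Qed.
Lemma ip0r z : ip z 0 = 0.
Proof. by rewrite ipC ip0l conjc0. Qed.
Lemma ipDr x y z : ip z (x + y) = ip z x + ip z y.
Proof. by rewrite ipC ipDl rmorphD /= -!ipC. Qed.
Lemma ipZr a x z : ip z (a *: x) = conjc a * ip z x.
Proof. by rewrite ipC ipZl rmorphM /= -ipC. Qed.
Lemma ipBr x y z : ip z (x - y) = ip z x - ip z y.
Proof. by rewrite ipC ipBl rmorphB /= -!ipC. Qed.

Lemma ripC x y : rip y x = rip x y.
Proof. by rewrite ipC Re_conj. Qed.
Lemma ripDl x y z : rip (x + y) z = rip x z + rip y z.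
Proof. by rewrite ipDl ReD. Qed.
Lemma ripDr x y z : rip z (x + y) = rip z x + rip z y.
Proof. by rewrite ipDr ReD. Qed.
Lemma ripBl x y z : rip (x - y) z = rip x z - rip y z.
Proof. by rewrite ipBl ReB. Qed.
Lemma ripBr x y z : rip z (x - y) = rip z x - rip z y.
Proof. by rewrite ipBr ReB. Qed.
Lemma ripZl (r : R) x z : rip (r%:C *: x) z = r * rip x z.
Proof. by rewrite ipZl Re_realM. Qed.
Lemma ripZr (r : R) x z : rip z (r%:C *: x) = r * rip z x.
Proof. by rewrite ripC ripZl ripC. Qed.

Lemma Im_ip x y : Im (ip x y) = rip x ('i *: y).
Proof. by rewrite ipZr conj_i mulNr ReN Re_iM opprK. Qed.

Lemma ip_real x : ip x x = (n2 x)%:C.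
Proof. by case: (ge0_complex_real (ip_ge0 x)). Qed.
Lemma n2_ge0 x : 0 <= n2 x.
Proof. by case: (ge0_complex_real (ip_ge0 x)). Qed.
Lemma n2_eq0 x : n2 x = 0 -> x = 0.
Proof. by move=> h; apply: ip_eq0; rewrite ip_real h. Qed.

Lemma n2D x y : n2 (x + y) = n2 x + 2 * rip x y + n2 y.
Proof. rewrite /nrm2 ripDl !ripDr (ripC y x); lra. Qed.
Lemma n2B x y : n2 (x - y) = n2 x - 2 * rip x y + n2 y.
Proof. rewrite /nrm2 ripBl !ripBr (ripC y x); lra. Qed.
Lemma n2Z (r : R) x : n2 (r%:C *: x) = r ^+ 2 * n2 x.
Proof. by rewrite /nrm2 ripZl ripZr mulrA expr2. Qed.
Lemma n2_i x : n2 ('i *: x) = n2 x.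
Proof. by rewrite /nrm2 ipZl ipZr conj_i mulNr mulrN mulrA -expr2 sqr_i mulN1r opprK. Qed.
Lemma n2_sym x y : n2 (x - y) = n2 (y - x).
Proof. rewrite !n2B (ripC y x); lra. Qed.

Lemma n2_par x y : n2 (x + y) + n2 (x - y) = 2 * n2 x + 2 * n2 y.
Proof. rewrite n2D n2B; lra. Qed.
Lemma n2_le2 x y : n2 (x + y) <= 2 * n2 x + 2 * n2 y.
Proof. have := n2_par x y; have := n2_ge0 (x - y); lra. Qed.
Lemma n2_le2B x y z : n2 (x - z) <= 2 * n2 (x - y) + 2 * n2 (y - z).
Proof. have -> : x - z = (x - y) + (y - z) by rewrite addrA subrK. exact: n2_le2. Qed.

(* 2 t Re <x,y> <= t^2 ||x||^2 + ||y||^2, from ||t x - y||^2 >= 0. *)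
Lemma rip_amgm (t : R) x y : 2 * t * rip x y <= t ^+ 2 * n2 x + n2 y.
Proof. have := n2_ge0 (t%:C *: x - y); rewrite n2B n2Z ripZl; lra. Qed.

Lemma rip_le x y : rip x y <= (n2 x + n2 y) / 2.
Proof. have := rip_amgm 1 x y; rewrite expr1n; lra. Qed.

Lemma cauchy_schwarz x y : rip x y ^+ 2 <= n2 x * n2 y.
Proof. by apply: quad_discr; rewrite ?n2_ge0 // => t; apply: rip_amgm. Qed.

Lemma rip_small x g e : 0 < e -> n2 x < e ^+ 2 / (n2 g + 1) -> `|rip x g| < e.
Proof.
move=> e0 hx; have hg := n2_ge0 g; have hx0 := n2_ge0 x.
have : rip x g ^+ 2 < e ^+ 2.
  apply: le_lt_trans (cauchy_schwarz x g) _.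
  have : n2 x * (n2 g + 1) < e ^+ 2 by rewrite -ltr_pdivlMr //; lra.
  nra.
by rewrite -real_normK ?num_real // ltr_pXn2r // ?nnegrE ?normr_ge0 // ltW.
Qed.
End InnerProduct.

Section Convergence.
Variables (R : realType) (V : lmodType R[i]) (ip : V -> V -> R[i]).
Hypothesis hip : is_inner_product ip.
Local Notation n2 := (nrm2 ip).

Lemma nrm_lt x e : 0 < e -> (nrm ip x < e) <-> (n2 x < e ^+ 2).
Proof.
move=> e0; rewrite /nrm.
have -> : e = Num.sqrt (e ^+ 2) by rewrite sqrtr_sqr gtr0_norm.
by rewrite ltr_sqrt ?exprn_gt0 // sqrtr_sqr gtr0_norm.
Qed.

Definition cvgsq (u : nat -> V) (l : V) : Prop :=
  forall e, 0 < e -> exists N, forall n, (N <= n)%N -> n2 (u n - l) < e.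

Lemma cvgsqP u l : Defs.cvg_to ip u l <-> cvgsq u l.
Proof.
split => h e e0.
  have se0 : 0 < Num.sqrt e by rewrite sqrtr_gt0.
  have [N hN] := h _ se0; exists N => n /hN.
  by rewrite nrm_lt // sqr_sqrtr // ltW.
have [N hN] := h (e ^+ 2) (exprn_gt0 _ e0).
by exists N => n /hN; rewrite nrm_lt.
Qed.

Lemma eq_of_close x y :
  (forall e, 0 < e -> exists z, n2 (z - x) < e /\ n2 (z - y) < e) -> x = y.
Proof.
move=> h; apply/eqP; rewrite -subr_eq0; apply/eqP/(n2_eq0 hip).
apply/eqP; rewrite eq_le n2_ge0 // andbT; apply/ler_addgt0Pr => e e0.
have [z [hx hy]] := h (e / 4) (divr_gt0 e0 (ltr0n _ 4)).
by have := n2_le2B hip x z y; rewrite (n2_sym hip x z); lra.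
Qed.

Lemma cvgsq_unique u l l' : cvgsq u l -> cvgsq u l' -> l = l'.
Proof.
move=> h h'; apply: eq_of_close => e e0.
have [N hN] := h _ e0; have [N' hN'] := h' _ e0.
by exists (u (maxn N N')); rewrite hN ?hN' ?leq_maxl ?leq_maxr.
Qed.

Lemma complete_cvgsq : complete_ip ip -> forall u : nat -> V,
  (forall e, 0 < e -> exists N, forall m n, (N <= m)%N -> (N <= n)%N ->
     n2 (u m - u n) < e) ->
  exists l, cvgsq u l.
Proof.
move=> hc u hu; suff [l /cvgsqP] : exists l, Defs.cvg_to ip u l by exists l.
apply: hc => e e0; have [N hN] := hu _ (exprn_gt0 2 e0).
by exists N => m n hm hn; rewrite nrm_lt //; apply: hN.
Qed.

Lemma cvgsq_rip u l z : cvgsq u l -> forall e, 0 < e ->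
  exists N, forall n, (N <= n)%N -> `|Re (ip (u n) z) - Re (ip l z)| < e.
Proof.
move=> h e e0; have d0 : 0 < e ^+ 2 / (n2 z + 1).
  by rewrite divr_gt0 ?exprn_gt0 //; have := n2_ge0 hip z; lra.
have [N hN] := h _ d0; exists N => n /hN hn.
by rewrite -(ripBl hip); apply: rip_small.
Qed.
End Convergence.

Lemma archi_inv (R : realType) (e : R) : 0 < e ->
  exists N, forall n, (N <= n)%N -> (n.+1%:R)^-1 < e.
Proof.
move=> e0; exists (Num.truncn e^-1) => n hn.
have h2 : (Num.truncn e^-1).+1%:R <= n.+1%:R :> R by rewrite ler_nat ltnS.
rewrite -(invrK e) ltf_pV2 ?posrE ?invr_gt0 //.
exact: lt_le_trans (truncnS_gt e^-1) h2.
Qed.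

(* In a complete space the
   projection P_W f exists: an element of W nearest to f is found as the limit
   of a minimizing sequence (Cauchy by the parallelogram law), and f - P_W f
   is orthogonal to W by a first-variation argument. *)
Section Projection.
Variables (R : realType) (V : lmodType R[i]) (ip : V -> V -> R[i]).
Hypotheses (hip : is_inner_product ip) (hcomp : complete_ip ip).
Local Notation rip x y := (Re (ip x y)).
Local Notation n2 := (nrm2 ip).

Variable W : set V.
Hypothesis hW : closed_subspace ip W.

Lemma sub0 : W 0. Proof. by case: hW. Qed.
Lemma subL a x y : W x -> W y -> W (a *: x + y).
Proof. by case: hW => _ [h _]; apply: h. Qed.
Lemma subZ a x : W x -> W (a *: x).
Proof. by move=> hx; rewrite -[a *: x]addr0; apply: subL => //; apply: sub0. Qed.
Lemma subD x y : W x -> W y -> W (x + y).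
Proof. by move=> hx; rewrite -[x]scale1r; apply: subL. Qed.
Lemma subB x y : W x -> W y -> W (x - y).
Proof. by move=> hx hy; apply: subD hx _; rewrite -scaleN1r; apply: subZ. Qed.
Lemma sub_lim u l : (forall n, W (u n)) -> cvgsq ip u l -> W l.
Proof. by case: hW => _ [_ h] hu /cvgsqP hl; apply: h hu hl. Qed.

Lemma orth_of_nearest x f : W x -> (forall w, W w -> n2 (f - x) <= n2 (f - w)) ->
  forall w, W w -> ip (f - x) w = 0.
Proof.
move=> hx hmin.
have hre w : W w -> rip (f - x) w = 0.
  move=> hw; have : rip (f - x) w ^+ 2 <= n2 w * 0.
    apply: quad_discr; rewrite ?n2_ge0 // => t.
    have := hmin (t%:C *: w + x) (subL _ hw hx).
    have -> : f - (t%:C *: w + x) = (f - x) - t%:C *: w.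
      by rewrite opprD addrA addrAC.
    rewrite (n2B hip (f - x)) (n2Z hip) (ripZr hip); lra.
  by rewrite mulr0 => h; apply/eqP; rewrite -sqrf_eq0 eq_le h sqr_ge0.
move=> w hw; apply: complex_ReIm; first by rewrite hre.
by rewrite (Im_ip hip) hre //; apply: subZ.
Qed.

Definition dist2 (f : V) : R := inf [set r | exists w, W w /\ r = n2 (f - w)].

Lemma dist2_le f w : W w -> dist2 f <= n2 (f - w).
Proof.
move=> hw; apply: ge_inf; last by exists w.
by exists 0 => r [w' [_ ->]]; apply: n2_ge0.
Qed.

Lemma dist2_approx f n : exists w, W w /\ n2 (f - w) < dist2 f + (n.+1%:R)^-1.
Proof.
have hn : 0 < (n.+1%:R : R)^-1 by rewrite invr_gt0 ltr0Sn.
have hE : [set r | exists w, W w /\ r = n2 (f - w)] !=set0.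
  by exists (n2 (f - 0)), 0; split => //; apply: sub0.
have hlb : has_lbound [set r | exists w, W w /\ r = n2 (f - w)].
  by exists 0 => r [w [_ ->]]; apply: n2_ge0.
by have [r [w [hw ->]] hr] := inf_adherent hn (conj hE hlb); exists w.
Qed.

Lemma dist2_midpoint f x y : W x -> W y -> 4 * dist2 f <= n2 ((f - x) + (f - y)).
Proof.
move=> hx hy; have hm := subZ ((2%:R : R)^-1)%:C (subD hx hy).
have -> : (f - x) + (f - y) = (2%:R : R)%:C *: (f - ((2%:R : R)^-1)%:C *: (x + y)).
  rewrite scalerBr scalerA -rmorphM /= mulfV ?pnatr_eq0 // scale1r.
  by rewrite rmorph_nat scaler_nat mulr2n opprD !addrA [f - x + f]addrAC.
rewrite (n2Z hip); have := dist2_le f hm; rewrite expr2; lra.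
Qed.

Lemma near_points_close f x y (a b : R) : W x -> W y ->
  n2 (f - x) < dist2 f + a -> n2 (f - y) < dist2 f + b -> n2 (x - y) <= 2 * a + 2 * b.
Proof.
move=> hx hy hxa hyb; have := n2_par hip (f - y) (f - x); rewrite subrBB.
have := dist2_midpoint f hy hx; lra.
Qed.

Lemma nearest_exists f : exists x, W x /\ forall w, W w -> n2 (f - x) <= n2 (f - w).
Proof.
have [w hw] := choice (dist2_approx f).
have [x hx] : exists x, cvgsq ip w x.
  apply: (complete_cvgsq hcomp) => e e0.
  have [N hN] := archi_inv (divr_gt0 e0 (ltr0n _ 4)); exists N => m n hm hn.
  have := near_points_close (hw m).1 (hw n).1 (hw m).2 (hw n).2.
  move: (hN _ hm) (hN _ hn); move: (m.+1%:R : R)^-1 (n.+1%:R : R)^-1 => a b; lra.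
have Wx : W x by apply: (sub_lim (fun n => (hw n).1) hx).
exists x; split => // w' hw'; apply: le_trans (dist2_le f hw').
apply/ler_addgt0Pr => e e0; have e3 : 0 < e / 3 by rewrite divr_gt0.
have hcv : cvgsq ip (fun n => f - w n) (f - x).
  move=> e' e'0; have [N hN] := hx e' e'0; exists N => n /hN.
  by rewrite subrBB (n2_sym hip).
have [N1 hN1] := cvgsq_rip hip (f - x) hcv e3.
have [N2 hN2] := archi_inv e3.
have := hN1 (maxn N1 N2) (leq_maxl _ _); rewrite ltr_norml => /andP[h1 h2].
have := hN2 (maxn N1 N2) (leq_maxr _ _); have := (hw (maxn N1 N2)).2.
have := rip_le hip (f - w (maxn N1 N2)) (f - x); rewrite /nrm2 in h1 h2 *.
by move: ((maxn N1 N2).+1%:R : R)^-1 => a; lra.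
Qed.

Lemma oproj_spec f : W (oproj ip W f) /\ forall w, W w -> ip (f - oproj ip W f) w = 0.
Proof.
have [x [hx hmin]] := nearest_exists f.
have hex : exists x, W x /\ forall w, W w -> ip (f - x) w = 0.
  by exists x; split => //; apply: orth_of_nearest.
exact: (xgetPex 0 hex).
Qed.

Local Notation P := (oproj ip W).

Lemma oproj_unique f x : W x -> (forall w, W w -> ip (f - x) w = 0) -> P f = x.
Proof.
move=> hx hox; have [hp hop] := oproj_spec f.
apply/eqP; rewrite -subr_eq0; apply/eqP/(ip_eq0 hip).
have hw : W (P f - x) by apply: subB.
by rewrite -{1}(subrBB f) (ipBl hip) hox // hop // subrr.
Qed.

Lemma oprojL a f g : P (a *: f + g) = a *: P f + P g.
Proof.
have [hp1 ho1] := oproj_spec f; have [hp2 ho2] := oproj_spec g.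
apply: oproj_unique; first exact: subL.
move=> w hw; have -> : a *: f + g - (a *: P f + P g) = a *: (f - P f) + (g - P g).
  by rewrite scalerBr opprD !addrA; congr (_ + _); rewrite addrAC.
by rewrite (ipL hip) ho1 // ho2 // mulr0 addr0.
Qed.

(* P_W is self-adjoint: <P f, g> = <P f, P g> = <f, P g>. *)
Lemma ip_oproj f g : ip (P f) g = ip f (P g).
Proof.
have [hp1 ho1] := oproj_spec f; have [hp2 ho2] := oproj_spec g.
have /eqP := ho2 _ hp1; have /eqP := ho1 _ hp2.
rewrite !(ipBl hip) !subr_eq0 => /eqP -> /eqP e.
by rewrite (ipC hip) e -(ipC hip).
Qed.
End Projection.

Lemma ip_inj (R : realType) (V : lmodType R[i]) (ip : V -> V -> R[i]) x y :
  is_inner_product ip -> (forall z, ip z x = ip z y) -> x = y.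
Proof.
move=> hip h; apply/eqP; rewrite -subr_eq0; apply/eqP/(ip_eq0 hip).
by rewrite (ipBr hip) h subrr.
Qed.

(* Riesz representation: a linear functional phi with |Re phi f|^2 <= C ||f||^2
   is f |-> <f, x> for some x.  x is taken along the orthogonal complement of
   the (closed) kernel of phi. *)
Section Riesz.
Variables (R : realType) (V : lmodType R[i]) (ip : V -> V -> R[i]).
Hypotheses (hip : is_inner_product ip) (hcomp : complete_ip ip).
Local Notation n2 := (nrm2 ip).

Variable phi : V -> R[i].
Hypothesis phiL : forall a x y, phi (a *: x + y) = a * phi x + phi y.
Variable C : R.
Hypothesis C0 : 0 < C.
Hypothesis phi_bnd : forall f, Re (phi f) ^+ 2 <= C * n2 f.

Lemma phi0 : phi 0 = 0. Proof. exact: (@lin0 _ _ R[i]^o _ phiL). Qed.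
Lemma phiZ a x : phi (a *: x) = a * phi x. Proof. exact: (@linZ _ _ R[i]^o _ phiL). Qed.
Lemma phiB x y : phi (x - y) = phi x - phi y. Proof. exact: (@linB _ _ R[i]^o _ phiL). Qed.

(* A value of phi is controlled by ||z||^2 for every z with the same value;
   the imaginary part is handled through phi (i z) = i phi z. *)
Lemma phi_value_bound l z : phi z = phi l ->
  Re (phi l) ^+ 2 <= C * n2 z /\ Im (phi l) ^+ 2 <= C * n2 z.
Proof.
move=> e; split; first by rewrite -e; apply: phi_bnd.
by have := phi_bnd ('i *: z); rewrite phiZ e (n2_i hip) Re_iM sqrrN.
Qed.

Lemma sq_small (a : R) (b : nat -> R) : (forall n, a ^+ 2 <= C * b n) ->
  (forall e, 0 < e -> exists n, b n < e) -> a = 0.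
Proof.
move=> h hb; apply/eqP; rewrite -sqrf_eq0 eq_le sqr_ge0 andbT.
apply/ler_addgt0Pr => e e0; rewrite add0r.
have [n hn] := hb (e / C) (divr_gt0 e0 C0).
by apply: le_trans (h n) _; rewrite -ler_pdivlMl // mulrC ltW.
Qed.

Definition kernel := [set f | phi f = 0].

Lemma kernel_closed : closed_subspace ip kernel.
Proof.
split; first exact: phi0.
split=> [a x y|u l hu /cvgsqP hl]; first by rewrite /kernel /= phiL => -> ->; rewrite mulr0 addr0.
have key n : phi (l - u n) = phi l by rewrite phiB hu subr0.
have hb e : 0 < e -> exists n, n2 (l - u n) < e.
  by move=> e0; have [N hN] := hl e e0; exists N; rewrite (n2_sym hip); apply: hN.
by apply: complex_ReIm; apply: (sq_small (b := fun n => n2 (l - u n))) => // n;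
  case: (phi_value_bound (key n)).
Qed.

Lemma riesz : exists x, forall f, phi f = ip f x.
Proof.
have [hall|/existsNP [f0 hf0]] := pselect (forall f, phi f = 0).
  by exists 0 => f; rewrite hall (ip0r hip).
have [hp ho] := oproj_spec hip hcomp kernel_closed f0.
set z := f0 - oproj ip kernel f0 in ho.
have phiz : phi z = phi f0 by rewrite /z phiB hp subr0.
have zn0 : ip z z != 0.
  by apply/negP => /eqP /(ip_eq0 hip) z0; apply: hf0; rewrite -phiz z0 phi0.
have pz : phi z != 0 by rewrite phiz; apply/eqP.
exists (conjc (phi z / ip z z) *: z) => f; rewrite (ipZr hip) conjcK.
have hf : kernel (f - (phi f / phi z) *: z) by rewrite /kernel /= phiB phiZ divfK // subrr.
have /eqP := ho _ hf; rewrite (ipBr hip) (ipZr hip) subr_eq0 => /eqP h.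
have -> : ip f z = phi f / phi z * ip z z by rewrite (ipC hip) h rmorphM /= conjcK -(ipC hip).
by field; rewrite zn0 pz.
Qed.
End Riesz.

Section Adjoint.
Variables (R : realType) (H K : lmodType R[i]).
Variables (ipH : H -> H -> R[i]) (ipK : K -> K -> R[i]).
Hypotheses (hipH : is_inner_product ipH) (hcompH : complete_ip ipH).
Hypothesis hipK : is_inner_product ipK.
Variable Lam : H -> K.
Hypothesis hL : bounded_op ipH ipK Lam.

Lemma bounded_linear a x y : Lam (a *: x + y) = a *: Lam x + Lam y.
Proof. by case: hL => h _; apply: h. Qed.

Lemma bounded_sq : exists M, 0 < M /\ forall f, nrm2 ipK (Lam f) <= M * nrm2 ipH f.
Proof.
case: hL => _ [M0 hM0]; exists (M0 ^+ 2 + 1); split; first by have := sqr_ge0 M0; lra.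
move=> f; have := hM0 f; rewrite /nrm => h.
have a0 := n2_ge0 hipK (Lam f); have b0 := n2_ge0 hipH f.
have : nrm2 ipK (Lam f) <= M0 ^+ 2 * nrm2 ipH f.
  rewrite -(sqr_sqrtr a0) -(sqr_sqrtr b0) -exprMn ler_pXn2r ?nnegrE //.
  exact: le_trans (sqrtr_ge0 _) h.
by have := mulr_ge0 (sqr_ge0 M0) b0; nra.
Qed.

Local Notation adj := (adjoint ipH ipK Lam).

Lemma adjoint_spec y f : ipK (Lam f) y = ipH f (adj y).
Proof.
have [M [M0 hM]] := bounded_sq; have hy := n2_ge0 hipK y.
have hex : exists x, forall f, ipK (Lam f) y = ipH f x.
  apply: (@riesz _ _ ipH hipH hcompH (fun f => ipK (Lam f) y) _ (M * nrm2 ipK y + 1)).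
  - by move=> a x z; rewrite bounded_linear (ipL hipK).
  - by have := mulr_ge0 (ltW M0) hy; lra.
  - move=> g; apply: le_trans (cauchy_schwarz hipK (Lam g) y) _.
    by have := hM g; have := n2_ge0 hipH g; have := n2_ge0 hipK (Lam g); nra.
exact: (xgetPex 0 hex).
Qed.

Lemma adjointL a y y' : adj (a *: y + y') = a *: adj y + adj y'.
Proof.
apply: (ip_inj hipH) => z.
by rewrite -adjoint_spec (ipDr hipK) (ipZr hipK) (ipDr hipH) (ipZr hipH) -!adjoint_spec.
Qed.
End Adjoint.

Section FiniteSums.
Variable J : choiceType.

Lemma fsum_morph (U V : zmodType) (phi : U -> V)
    (phiD : forall x y, phi (x + y) = phi x + phi y) (phi0 : phi 0 = 0)
    (X : set J) (F : J -> U) : finite_set X ->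
  phi (\sum_(j \in X) F j) = \sum_(j \in X) phi (F j).
Proof. by move=> fX; rewrite !fsbig_finite //; apply: (big_morph phi phiD phi0). Qed.

Lemma fsum_scale (R : pzRingType) (V : lmodType R) (X : set J) a (F : J -> V) : finite_set X ->
  \sum_(j \in X) (a *: F j) = a *: \sum_(j \in X) F j.
Proof. by move=> fX; rewrite !fsbig_finite // scaler_sumr. Qed.

Lemma fsum_le (R : numDomainType) (X : set J) (F G : J -> R) : finite_set X ->
  (forall j, F j <= G j) -> \sum_(j \in X) F j <= \sum_(j \in X) G j.
Proof. by move=> fX h; rewrite !fsbig_finite //; apply: ler_sum => j _. Qed.

Lemma fsumU (V : zmodType) (X Y : set J) (F : J -> V) :
  finite_set X -> finite_set Y -> X `&` Y = set0 ->
  \sum_(j \in X `|` Y) F j = \sum_(j \in X) F j + \sum_(j \in Y) F j.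
Proof. by move=> fX fY h; apply: fsbigU0 => //; rewrite h. Qed.

Lemma fsum_setD (V : zmodType) (X A : set J) (F : J -> V) : finite_set A -> X `<=` A ->
  \sum_(j \in A) F j = \sum_(j \in X) F j + \sum_(j \in A `\` X) F j.
Proof.
move=> fA sXA; rewrite -{1}(setDUK sXA) fsumU ?setDIK //; last exact: finite_setD.
exact: sub_finite_set fA.
Qed.

Lemma fsum_sub (R : numDomainType) (X Y : set J) (F : J -> R) : finite_set Y ->
  X `<=` Y -> (forall j, 0 <= F j) -> \sum_(j \in X) F j <= \sum_(j \in Y) F j.
Proof.
move=> fY sXY h; rewrite (fsum_setD _ fY sXY) lerDl.
by apply: fsumr_ge0 => j _.
Qed.

Fixpoint cumul (X : nat -> set J) n : set J :=
  if n is m.+1 then cumul X m `|` X n else X 0.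

Lemma cumul_fin (X : nat -> set J) n : (forall k, finite_set (X k)) -> finite_set (cumul X n).
Proof. by move=> h; elim: n => [|n IH] //=; rewrite finite_setU. Qed.

Lemma cumul_sub (X : nat -> set J) n : X n `<=` cumul X n.
Proof. by case: n => [|n] //= x hx; right. Qed.

Lemma cumul_mono (X : nat -> set J) n m : (n <= m)%N -> cumul X n `<=` cumul X m.
Proof.
elim: m => [|m IH]; first by rewrite leqn0 => /eqP ->.
rewrite leq_eqVlt => /orP [/eqP -> //|]; rewrite ltnS => /IH h x hx /=.
by left; apply: h.
Qed.
End FiniteSums.

Section Nets.
Variables (R : realType) (J : choiceType).

Definition netlim (a : set J -> R) (l : R) := forall e, 0 < e -> exists X0 : set J,
  finite_set X0 /\ forall X, finite_set X -> X0 `<=` X -> `|a X - l| < e.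

Lemma netlim_le a l c : netlim a l -> (forall X, finite_set X -> a X <= c) -> l <= c.
Proof.
move=> h hc; apply/ler_addgt0Pr => e e0.
have [X0 [f0 hX]] := h e e0; have := hX X0 f0 (@subset_refl _ X0).
by rewrite ltr_norml => /andP [h1 h2]; have := hc X0 f0; lra.
Qed.

Lemma netlim_unique a l l' : netlim a l -> netlim a l' -> l = l'.
Proof.
have key x y : netlim a x -> netlim a y -> x <= y.
  move=> hx hy; apply/ler_addgt0Pr => e e0.
  have e2 : 0 < e / 2 by rewrite divr_gt0.
  have [X0 [f0 hX]] := hx _ e2; have [X1 [f1 hY]] := hy _ e2.
  have fU : finite_set (X0 `|` X1) by rewrite finite_setU.
  have := hX _ fU (@subsetUl _ _ _); have := hY _ fU (@subsetUr _ _ _).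
  by rewrite !ltr_norml => /andP [? ?] /andP [? ?]; lra.
by move=> h1 h2; apply/eqP; rewrite eq_le !key.
Qed.

Lemma netlim_ext a b l : (forall X, finite_set X -> a X = b X) -> netlim a l -> netlim b l.
Proof.
move=> e h e' e'0; have [X0 [f0 hX]] := h e' e'0.
by exists X0; split => // X fX sX; rewrite -e //; apply: hX.
Qed.
End Nets.

Section UnconditionalSums.
Variables (R : realType) (V : lmodType R[i]) (ip : V -> V -> R[i]).
Hypothesis hip : is_inner_product ip.
Local Notation rip x y := (Re (ip x y)).
Local Notation n2 := (nrm2 ip).
Variable J : choiceType.

Definition hsum_sq (F : J -> V) s := forall e, 0 < e -> exists X0 : set J,
  finite_set X0 /\ forall X, finite_set X -> X0 `<=` X -> n2 (\sum_(j \in X) F j - s) < e.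

Lemma hsum_sqP F s : hsum_to ip F s <-> hsum_sq F s.
Proof.
split => h e e0.
  have se0 : 0 < Num.sqrt e by rewrite sqrtr_gt0.
  have [X0 [f0 hX]] := h _ se0; exists X0; split => // X fX sX.
  by have := hX X fX sX; rewrite nrm_lt // sqr_sqrtr // ltW.
have [X0 [f0 hX]] := h _ (exprn_gt0 2 e0); exists X0; split => // X fX sX.
by rewrite nrm_lt //; apply: hX.
Qed.

Lemma cumul_tail (F : J -> V) (X : nat -> set J) n A :
  (forall k, finite_set (X k)) ->
  (forall k Y, finite_set Y -> X k `&` Y = set0 -> n2 (\sum_(j \in Y) F j) < (k.+1%:R)^-1) ->
  finite_set A -> cumul X n `<=` A ->
  n2 (\sum_(j \in A) F j - \sum_(j \in cumul X n) F j) < (n.+1%:R)^-1.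
Proof.
move=> finX tailX fA sA; rewrite (fsum_setD _ fA sA) addrAC subrr add0r.
apply: tailX; first exact: finite_setD.
by rewrite -subset0 => x [/cumul_sub hx [_ /(_ hx)]].
Qed.

Lemma hsum_cauchy : complete_ip ip -> forall F : J -> V,
  (forall e, 0 < e -> exists X, finite_set X /\ forall Y, finite_set Y ->
     X `&` Y = set0 -> n2 (\sum_(j \in Y) F j) < e) ->
  exists s, hsum_to ip F s.
Proof.
move=> hcomp F h.
have hX n : exists X, finite_set X /\ forall Y, finite_set Y ->
    X `&` Y = set0 -> n2 (\sum_(j \in Y) F j) < (n.+1%:R)^-1.
  by apply: h; rewrite invr_gt0 ltr0Sn.
have [X hXs] := choice hX.
have finX k : finite_set (X k) by case: (hXs k).
have tailX := fun k => (hXs k).2.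
have fG n : finite_set (cumul X n) by apply: cumul_fin.
pose u n := \sum_(j \in cumul X n) F j.
have [s hs] : exists s, cvgsq ip u s.
  apply: (complete_cvgsq hcomp) => e e0.
  have [N hN] := archi_inv (divr_gt0 e0 (ltr0n _ 4)); exists N => m n hm hn.
  have h1 : n2 (u m - u N) < (N.+1%:R)^-1 := cumul_tail finX tailX (fG m) (cumul_mono hm).
  have h2 : n2 (u n - u N) < (N.+1%:R)^-1 := cumul_tail finX tailX (fG n) (cumul_mono hn).
  have := n2_le2B hip (u m) (u N) (u n); rewrite [n2 (u N - u n)](n2_sym hip).
  by move: h1 h2 (hN N (leqnn N)); move: (N.+1%:R : R)^-1 => a; lra.
exists s; apply/hsum_sqP => e e0; have e4 : 0 < e / 4 by rewrite divr_gt0.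
have [N1 hN1] := hs _ e4; have [N2 hN2] := archi_inv e4.
exists (cumul X (maxn N1 N2)); split => // A fA sA.
have h1 : n2 (\sum_(j \in A) F j - u (maxn N1 N2)) < ((maxn N1 N2).+1%:R)^-1.
  exact: cumul_tail.
have := hN1 _ (leq_maxl N1 N2); have := hN2 _ (leq_maxr N1 N2).
have := n2_le2 hip (\sum_(j \in A) F j - u (maxn N1 N2)) (u (maxn N1 N2) - s).
rewrite addrA subrK; move: h1; move: ((maxn N1 N2).+1%:R : R)^-1 => a; lra.
Qed.

Lemma hsum_unique (F : J -> V) s s' : hsum_to ip F s -> hsum_to ip F s' -> s = s'.
Proof.
move=> /hsum_sqP h /hsum_sqP h'; apply: (eq_of_close hip) => e e0.
have [X0 [f0 hX]] := h _ e0; have [X1 [f1 hY]] := h' _ e0.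
have fU : finite_set (X0 `|` X1) by rewrite finite_setU.
by exists (\sum_(j \in X0 `|` X1) F j); rewrite hX ?hY.
Qed.

Lemma n2Zc a x : n2 (a *: x) = Re (a * conjc a) * n2 x.
Proof.
rewrite /nrm2 (ipZl hip) (ipZr hip) mulrA (ip_real hip).
by case: (a * conjc a) => p q /=; rewrite mulr0 subr0.
Qed.

Lemma hsum_lin (F G : J -> V) s t a : hsum_to ip F s -> hsum_to ip G t ->
  hsum_to ip (fun j => a *: F j + G j) (a *: s + t).
Proof.
move=> /hsum_sqP h /hsum_sqP h'; apply/hsum_sqP => e e0.
have k0 : 0 <= Re (a * conjc a).
  by case: a => p q /=; rewrite mulrN opprK -!expr2 addr_ge0 ?sqr_ge0.
set k := Re (a * conjc a) in k0 *.
have d0 : 0 < e / (4 * (k + 1)) by rewrite divr_gt0 //; lra.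
have [X0 [f0 hX]] := h _ d0; have [X1 [f1 hY]] := h' _ (divr_gt0 e0 (ltr0n _ 4)).
exists (X0 `|` X1); split => [|X fX sX]; first by rewrite finite_setU.
have h1 := hX X fX (subset_trans (@subsetUl _ _ _) sX).
have h2 := hY X fX (subset_trans (@subsetUr _ _ _) sX).
rewrite fsbig_split // fsum_scale //.
have -> : a *: \sum_(j \in X) F j + \sum_(j \in X) G j - (a *: s + t) =
    a *: (\sum_(j \in X) F j - s) + (\sum_(j \in X) G j - t).
  by rewrite scalerBr opprD !addrA; congr (_ + _); rewrite addrAC.
apply: le_lt_trans (n2_le2 hip _ _) _; rewrite n2Zc -/k.
have hk : k * n2 (\sum_(j \in X) F j - s) <= (k + 1) * (e / (4 * (k + 1))).
  by apply: ler_pM; rewrite ?n2_ge0 ?lerDl ?ler01 // ltW.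
have : (k + 1) * (e / (4 * (k + 1))) = e / 4 by field; lra.
by lra.
Qed.

Lemma fsum_rip (X : set J) (F : J -> V) g : finite_set X ->
  rip (\sum_(j \in X) F j) g = \sum_(j \in X) rip (F j) g.
Proof. by apply: (fsum_morph (phi := fun x => rip x g)) => [x y|]; rewrite ?(ripDl hip) ?(ip0l hip). Qed.

Lemma hsum_rip (F : J -> V) s g : hsum_to ip F s ->
  netlim (fun X => \sum_(j \in X) rip (F j) g) (rip s g).
Proof.
move=> /hsum_sqP h e e0; have d0 : 0 < e ^+ 2 / (n2 g + 1).
  by rewrite divr_gt0 ?exprn_gt0 //; have := n2_ge0 hip g; lra.
have [X0 [f0 hX]] := h _ d0; exists X0; split => // X fX sX.
by rewrite -fsum_rip // -(ripBl hip); apply: (rip_small hip) => //; apply: hX.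
Qed.
End UnconditionalSums.

(* S exists as an unconditional sum because the frame form controls the
   tails; it is linear, self-adjoint with Re <S f, f> = Q f, satisfies
   A^2 ||f||^2 <= ||S f||^2 <= B^2 ||f||^2, and is therefore bijective. *)
Section FusionFrame.
Variables (R : realType) (J : countType) (H : lmodType R[i]) (ipH : H -> H -> R[i]).
Hypotheses (hipH : is_inner_product ipH) (hcompH : complete_ip ipH).
Variables (K : J -> lmodType R[i]) (ipK : forall j, K j -> K j -> R[i]).
Hypothesis hipK : forall j, is_inner_product (@ipK j).
Variables (W : J -> set H) (Lam : forall j, H -> K j) (v : J -> R) (A B : R).
Hypothesis hfr : gfusion_frame ipH ipK W Lam v A B.

Local Notation rip x y := (Re (ipH x y)).
Local Notation n2 := (nrm2 ipH).
Local Notation P j := (oproj ipH (W j)).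
Local Notation S := (gf_op ipH ipK W Lam v).
Local Notation Sinv := (Defs.finv S).

Lemma frame_A_gt0 : 0 < A. Proof. by case: hfr. Qed.
Lemma frame_B_gt0 : 0 < B. Proof. by case: hfr => A0 [AB _]; apply: lt_le_trans AB. Qed.
Lemma frame_closed j : closed_subspace ipH (W j). Proof. by case: hfr => _ [_ [h _]]. Qed.
Lemma frame_bounded j : bounded_op ipH (@ipK j) (Lam j).
Proof. by case: hfr => _ [_ [_ [_ [h _]]]]. Qed.

Definition fterm j f := v j ^+ 2 * nrm2 (@ipK j) (Lam j (P j f)).
Definition fcross j f g := v j ^+ 2 * Re (@ipK j (Lam j (P j f)) (Lam j (P j g))).
Definition opterm j f := (v j ^+ 2)%:C *: P j (adjoint ipH (@ipK j) (Lam j) (Lam j (P j f))).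
(* The frame form, a real number by the upper frame bound. *)
Definition fform f := fine (gf_sum ipH ipK W Lam v f).

Lemma fterm_ge0 j f : 0 <= fterm j f.
Proof. by rewrite mulr_ge0 ?sqr_ge0 ?n2_ge0. Qed.

Lemma gf_sumE f : gf_sum ipH ipK W Lam v f = (fform f)%:E.
Proof.
rewrite /fform; case: hfr => _ [_ [_ [_ [_ /(_ f) []]]]].
by case: (gf_sum _ _ _ _ _ f).
Qed.

Lemma fform_bounds f : A * n2 f <= fform f /\ fform f <= B * n2 f.
Proof. by case: hfr => _ [_ [_ [_ [_ /(_ f) []]]]]; rewrite gf_sumE !lee_fin. Qed.

Lemma fform_ge_fsum f X : finite_set X -> \sum_(j \in X) fterm j f <= fform f.
Proof.
move=> fX; rewrite -lee_fin -gf_sumE -fsumEFin //.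
by apply: esum_ge; exists X.
Qed.

Lemma fform_adherent f e : 0 < e -> exists X, finite_set X /\ fform f - e < \sum_(j \in X) fterm j f.
Proof.
move=> e0; have hfin : (\esum_(j in [set: J]) (fterm j f)%:E)%E \is a fin_num.
  by rewrite -[X in X \is a fin_num]/(gf_sum _ _ _ _ _ f) gf_sumE.
have [x [X [fX _] <-] hx] := ub_ereal_sup_adherent e0 hfin.
exists X; split => //.
by move: hx; rewrite -/(esum _ _) -[esum _ _]/(gf_sum _ _ _ _ _ f) gf_sumE fsumEFin // -EFinB lte_fin.
Qed.

Lemma fform_net f : netlim (fun X => \sum_(j \in X) fterm j f) (fform f).
Proof.
move=> e e0; have [X0 [f0 h0]] := fform_adherent f e0; exists X0; split => // X fX sX.
have h1 := fform_ge_fsum f fX.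
have h2 : \sum_(j \in X0) fterm j f <= \sum_(j \in X) fterm j f.
  by apply: fsum_sub => // j; apply: fterm_ge0.
by rewrite ltr_norml; apply/andP; split; lra.
Qed.

(* <opterm j f, g> = v_j^2 <Lam_j P_j f, Lam_j P_j g>, by self-adjointness
   of P_j and the defining property of Lam_j^*. *)
Lemma opterm_ip j f g :
  ipH (opterm j f) g = (v j ^+ 2)%:C * @ipK j (Lam j (P j f)) (Lam j (P j g)).
Proof.
rewrite (ipZl hipH) (ip_oproj hipH hcompH (frame_closed j)) (ipC hipH).
by rewrite -(adjoint_spec hipH hcompH (hipK j) (frame_bounded j)) -(ipC (hipK j)).
Qed.

Lemma opterm_rip j f g : rip (opterm j f) g = fcross j f g.
Proof. by rewrite opterm_ip Re_realM. Qed.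

Lemma fcross_sym j f g : fcross j f g = fcross j g f.
Proof. by rewrite /fcross (ripC (hipK j)). Qed.

Lemma fcross_amgm j (t : R) f g : 2 * t * fcross j f g <= t ^+ 2 * fterm j f + fterm j g.
Proof.
have h := rip_amgm (hipK j) t (Lam j (P j f)) (Lam j (P j g)).
rewrite /fcross /fterm; have v0 := sqr_ge0 (v j).
set a := Re _ in h *; set b := nrm2 _ _ in h *; set c := nrm2 _ _ in h *; nra.
Qed.

Lemma fsum_fcross_amgm (X : set J) (t : R) f g : finite_set X ->
  2 * t * \sum_(j \in X) fcross j f g <=
  t ^+ 2 * \sum_(j \in X) fterm j f + \sum_(j \in X) fterm j g.
Proof.
move=> fX; rewrite !mulr_fsumr -fsbig_split //.
by apply: fsum_le => // j; apply: fcross_amgm.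
Qed.

Lemma opterm_partial_bound (Y : set J) f : finite_set Y ->
  n2 (\sum_(j \in Y) opterm j f) <= B * \sum_(j \in Y) fterm j f.
Proof.
move=> fY; set z := \sum_(j \in Y) opterm j f.
have hz : n2 z = \sum_(j \in Y) fcross j f z.
  by rewrite /nrm2 {1}/z (fsum_rip hipH) //; apply: eq_fsbigr => j _; apply: opterm_rip.
have h := fsum_fcross_amgm B f z fY; rewrite -hz in h.
have hq : \sum_(j \in Y) fterm j z <= B * n2 z.
  exact: le_trans (fform_ge_fsum z fY) (fform_bounds z).2.
have B0 := frame_B_gt0; have n0 := n2_ge0 hipH z.
by rewrite -(ler_pM2l B0); nra.
Qed.

(* The frame operator series converges: its tails are bounded by tails of
   the frame form. *)
Lemma frame_op_exists f : exists s, hsum_to ipH (fun j => opterm j f) s.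
Proof.
apply: (hsum_cauchy hipH hcompH) => e e0.
have B0 := frame_B_gt0; have eB : 0 < e / B by rewrite divr_gt0.
have [X [fX hX]] := fform_adherent f eB; exists X; split => // Y fY hXY.
apply: le_lt_trans (opterm_partial_bound f fY) _.
have fU : finite_set (X `|` Y) by rewrite finite_setU.
have := fform_ge_fsum f fU; rewrite fsumU //.
by rewrite -ltr_pdivlMl // mulrC; lra.
Qed.

Lemma frame_op_spec f : hsum_to ipH (fun j => opterm j f) (S f).
Proof. exact: (xgetPex 0 (frame_op_exists f)). Qed.

Lemma frame_op_net f g : netlim (fun X => \sum_(j \in X) fcross j f g) (rip (S f) g).
Proof.
apply: netlim_ext (hsum_rip hipH g (frame_op_spec f)) => X fX.
by apply: eq_fsbigr => j _; apply: opterm_rip.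
Qed.

Lemma frame_op_form f : rip (S f) f = fform f.
Proof. exact: netlim_unique (frame_op_net f f) (fform_net f). Qed.

Lemma frame_op_sym f g : rip (S f) g = rip (S g) f.
Proof.
apply: netlim_unique (frame_op_net f g) _.
by apply: netlim_ext (frame_op_net g f) => X fX; apply: eq_fsbigr => j _; apply: fcross_sym.
Qed.

Lemma frame_op_amgm f g (t : R) : 0 < t -> 2 * t * rip (S f) g <= t ^+ 2 * fform f + fform g.
Proof.
move=> t0; rewrite -ler_pdivlMl ?mulr_gt0 //.
apply: (netlim_le (frame_op_net f g)) => X fX; rewrite ler_pdivlMl ?mulr_gt0 //.
apply: le_trans (fsum_fcross_amgm t f g fX) _.
have := fform_ge_fsum f fX; have := fform_ge_fsum g fX; have := sqr_ge0 t; nra.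
Qed.

(* Linearity of the terms, hence of S (by uniqueness of unconditional sums). *)
Lemma opterm_lin j a f g : opterm j (a *: f + g) = a *: opterm j f + opterm j g.
Proof.
have PL := oprojL hipH hcompH (frame_closed j).
rewrite /opterm PL (bounded_linear (frame_bounded j)).
rewrite (adjointL hipH hcompH (hipK j) (frame_bounded j)) PL.
by rewrite scalerDr !scalerA mulrC.
Qed.

Lemma frame_op_lin a f g : S (a *: f + g) = a *: S f + S g.
Proof.
apply: (hsum_unique hipH (frame_op_spec _)).
have := hsum_lin hipH a (frame_op_spec f) (frame_op_spec g).
by congr hsum_to; apply: funext => j; rewrite opterm_lin.
Qed.

Lemma frame_opB f g : S (f - g) = S f - S g.
Proof. exact: (linB (T := S) frame_op_lin). Qed.

Lemma frame_opZ a f : S (a *: f) = a *: S f.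
Proof. exact: (linZ (T := S) frame_op_lin). Qed.

(* Self-adjointness, from the symmetry of Re <S f, g> applied also to i g. *)
Lemma frame_op_selfadj f g : ipH (S f) g = ipH f (S g).
Proof.
apply: complex_ReIm; first by rewrite frame_op_sym (ripC hipH).
by rewrite !(Im_ip hipH) -frame_opZ frame_op_sym frame_opZ (ripC hipH).
Qed.

Lemma frame_op_upper f : n2 (S f) <= B ^+ 2 * n2 f.
Proof.
have B0 := frame_B_gt0; have h := frame_op_amgm f (S f) B0.
have [_ h1] := fform_bounds f; have [_ h2] := fform_bounds (S f).
have := n2_ge0 hipH f; have := n2_ge0 hipH (S f); rewrite -/(nrm2 ipH (S f)) in h.
by rewrite -(ler_pM2l B0); nra.
Qed.

Lemma frame_op_lower f : A ^+ 2 * n2 f <= n2 (S f).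
Proof.
have A0 := frame_A_gt0; have [h1 _] := fform_bounds f; rewrite -frame_op_form in h1.
have n0 := n2_ge0 hipH f; have n1 := n2_ge0 hipH (S f).
have p1 : 0 <= A * n2 f by rewrite mulr_ge0 // ltW.
have : (A * n2 f) ^+ 2 <= n2 (S f) * n2 f.
  apply: le_trans (cauchy_schwarz hipH (S f) f).
  by rewrite ler_pXn2r ?nnegrE // (le_trans p1).
by rewrite exprMn; nra.
Qed.

Lemma frame_op_cvg u l : cvgsq ipH u l -> cvgsq ipH (fun n => S (u n)) (S l).
Proof.
move=> h e e0; have B2 : 0 < B ^+ 2 by rewrite exprn_gt0 // frame_B_gt0.
have [N hN] := h _ (divr_gt0 e0 B2); exists N => n /hN hn.
rewrite -frame_opB; apply: le_lt_trans (frame_op_upper _) _.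
by rewrite mulrC -ltr_pdivlMr.
Qed.

Lemma frame_op_inj f g : S f = S g -> f = g.
Proof.
move=> e; apply/eqP; rewrite -subr_eq0; apply/eqP/(n2_eq0 hipH).
have := frame_op_lower (f - g); rewrite frame_opB e subrr /nrm2 (ip0l hipH) /=.
have A2 : 0 < A ^+ 2 by rewrite exprn_gt0 // frame_A_gt0.
by have := n2_ge0 hipH (f - g); nra.
Qed.

(* The range of S is closed, by the lower bound and completeness. *)
Definition frame_range := [set y | exists x, y = S x].

Lemma frame_range_closed : closed_subspace ipH frame_range.
Proof.
split; first by exists 0; rewrite (lin0 (T := S) frame_op_lin).
split=> [a _ _ [x1 ->] [x2 ->]|u l hu /cvgsqP hl].
  by exists (a *: x1 + x2); rewrite frame_op_lin.
have [xs hxs] := choice hu.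
have A2 : 0 < A ^+ 2 by rewrite exprn_gt0 // frame_A_gt0.
have [x hx] : exists x, cvgsq ipH xs x.
  apply: (complete_cvgsq hcompH) => e e0.
  have [N hN] := hl _ (divr_gt0 (mulr_gt0 A2 e0) (ltr0n _ 4)); exists N => m n hm hn.
  have := frame_op_lower (xs m - xs n); rewrite frame_opB -!hxs.
  have := n2_le2B hipH (u m) l (u n); rewrite (n2_sym hipH l (u n)).
  have := hN _ hm; have := hN _ hn => h1 h2 h3 h4.
  by rewrite -(ltr_pM2l A2); lra.
exists x; apply: (cvgsq_unique hipH hl) => e e0.
by have [N hN] := frame_op_cvg hx e0; exists N => n /hN; rewrite -hxs.
Qed.

(* S is onto: a vector orthogonal to the range has zero frame form. *)
Lemma frame_op_surj y : exists x, S x = y.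
Proof.
have [[x hx] ho] := oproj_spec hipH hcompH frame_range_closed y.
set z := y - oproj ipH frame_range y in ho.
have hz : rip z (S z) = 0 by rewrite ho //; exists z.
have : A * n2 z <= 0 by rewrite -hz (ripC hipH) frame_op_form; case: (fform_bounds z).
rewrite pmulr_rle0 ?frame_A_gt0 // => hz0.
have /(n2_eq0 hipH) z0 : n2 z = 0 by apply/eqP; rewrite eq_le hz0 n2_ge0.
by exists x; rewrite -hx; apply/eqP; rewrite -subr_eq0 -oppr_eq0 opprB -/z z0.
Qed.

Lemma frame_op_invK y : S (Sinv y) = y.
Proof. exact: (xgetPex 0 (frame_op_surj y)). Qed.

Lemma frame_op_Kinv x : Sinv (S x) = x.
Proof. by apply: frame_op_inj; rewrite frame_op_invK. Qed.

Lemma frame_inv_lin a x y : Sinv (a *: x + y) = a *: Sinv x + Sinv y.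
Proof. by apply: frame_op_inj; rewrite frame_op_invK frame_op_lin !frame_op_invK. Qed.

Lemma frame_inv_selfadj x y : ipH (Sinv x) y = ipH x (Sinv y).
Proof. by rewrite -{1}(frame_op_invK y) -frame_op_selfadj frame_op_invK. Qed.

Lemma frame_inv_bound f : A ^+ 2 * n2 (Sinv f) <= n2 f.
Proof. by rewrite -{2}(frame_op_invK f); apply: frame_op_lower. Qed.

Lemma frame_op_polar u w : fform (u + w) - fform (u - w) = 4 * rip (S u) w.
Proof.
rewrite -!frame_op_form (linD (T := S) frame_op_lin) frame_opB.
rewrite !(ripBl hipH) !(ripDl hipH) !(ripBr hipH) !(ripDr hipH) (frame_op_sym w u); lra.
Qed.

(* The canonical dual: W_j^o = S^{-1} W_j is again a closed subspace, since
   S^{-1} is linear and S is continuous. *)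
Local Notation Wd := (dual_space ipH ipK W Lam v).

Lemma dual_space_closed j : closed_subspace ipH (Wd j).
Proof.
have hW := frame_closed j.
split; first by exists 0; [exact: (sub0 hW) | exact: (lin0 (T := Sinv) frame_inv_lin)].
split=> [a _ _ [w1 hw1 <-] [w2 hw2 <-]|u l hu /cvgsqP hl].
  by exists (a *: w1 + w2); [exact: (subL hW a hw1 hw2) | exact: frame_inv_lin].
have hex n : exists w, W j w /\ Sinv w = u n by case: (hu n) => w hw e; exists w.
have [ws hws] := choice hex.
have hS n : S (u n) = ws n by rewrite -(hws n).2 frame_op_invK.
have hc : cvgsq ipH ws (S l).
  by move=> e e0; have [N hN] := frame_op_cvg hl e0; exists N => n /hN; rewrite hS.
by exists (S l); [apply: (sub_lim hW (fun n => (hws n).1) hc)|apply: frame_op_Kinv].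
Qed.

(* P_{W_j} S^{-1} P_{W_j^o} = P_{W_j} S^{-1}: for w in W_j,
   <S^{-1} (f - P_{W_j^o} f), w> = <f - P_{W_j^o} f, S^{-1} w> = 0. *)
Lemma dual_proj j f : P j (Sinv (oproj ipH (Wd j) f)) = P j (Sinv f).
Proof.
have hW := frame_closed j.
have [hp ho] := oproj_spec hipH hcompH (dual_space_closed j) f.
set g := oproj ipH (Wd j) f in hp ho *.
have [hp2 ho2] := oproj_spec hipH hcompH hW (Sinv g).
symmetry; apply: (oproj_unique hipH hcompH hW) => // w hw.
have -> : Sinv f - P j (Sinv g) = Sinv (f - g) + (Sinv g - P j (Sinv g)).
  by rewrite (linB (T := Sinv) frame_inv_lin) addrA subrK.
by rewrite (ipDl hipH) ho2 // addr0 frame_inv_selfadj; apply: ho; exists w.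
Qed.

Lemma dual_form f :
  gf_sum ipH ipK Wd (dual_op ipH ipK W Lam v) v f = (rip f (Sinv f))%:E.
Proof.
have -> : gf_sum ipH ipK Wd (dual_op ipH ipK W Lam v) v f = gf_sum ipH ipK W Lam v (Sinv f).
  by congr esum; apply: funext => j; rewrite /dual_op dual_proj.
by rewrite gf_sumE -frame_op_form frame_op_invK.
Qed.
End FusionFrame.

Section FrameComparison.
Variables (R : realType) (J : countType) (H : lmodType R[i]) (ipH : H -> H -> R[i]).
Hypotheses (hipH : is_inner_product ipH) (hcompH : complete_ip ipH).
Variables (K : J -> lmodType R[i]) (ipK : forall j, K j -> K j -> R[i]).
Hypothesis hipK : forall j, is_inner_product (@ipK j).
Variables (W V : J -> set H) (Lam Gam : forall j, H -> K j) (v : J -> R).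
Variables (A1 B1 A2 B2 D : R).
Hypotheses (fL : gfusion_frame ipH ipK W Lam v A1 B1) (fG : gfusion_frame ipH ipK V Gam v A2 B2).
Hypothesis hD : forall g, `|fform ipH ipK W Lam v g - fform ipH ipK V Gam v g| <= D * nrm2 ipH g.

Local Notation rip x y := (Re (ipH x y)).
Local Notation n2 := (nrm2 ipH).
Local Notation SL := (gf_op ipH ipK W Lam v).
Local Notation SG := (gf_op ipH ipK V Gam v).

(* 4 (Re <S_Lam u, w> - Re <S_Gam u, w>) is the difference of the frame-form
   discrepancies at u + w and u - w; then use the parallelogram law. *)
Lemma frame_ops_close u w :
  4 * `|rip (SL u) w - rip (SG u) w| <= 2 * D * (n2 u + n2 w).
Proof.
have pL := frame_op_polar hipH hcompH hipK fL u w.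
have pG := frame_op_polar hipH hcompH hipK fG u w.
have h1 := hD (u + w); have h2 := hD (u - w); have par := n2_par hipH u w.
rewrite -[4]gtr0_norm // -normrM mulrBr -pL -pG.
have par' : D * n2 (u + w) + D * n2 (u - w) = 2 * D * (n2 u + n2 w).
  by rewrite -mulrDr par; ring.
move: h1 h2; rewrite !ler_norml => /andP[h1 h1'] /andP[h2 h2'].
by apply/andP; split; lra.
Qed.
End FrameComparison.

Theorem theorem4p2 (R : realType) (J : countType)
  (H : lmodType R[i]) (ipH : H -> H -> R[i])
  (K : J -> lmodType R[i]) (ipK : forall j, K j -> K j -> R[i])
  (W V : J -> set H) (Lam Gam : forall j, H -> K j) (v : J -> R)
  (A1 B1 A2 B2 D : R) :
  is_hilbert ipH -> separable ipH ->
  (forall j, is_hilbert (ipK j)) ->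
  gfusion_frame ipH ipK W Lam v A1 B1 ->
  gfusion_frame ipH ipK V Gam v A2 B2 ->
  0 < D ->
  (forall f : H,
     (`| gf_sum ipH ipK W Lam v f - gf_sum ipH ipK V Gam v f |
        <= (D * nrm2 ipH f)%:E)%E) ->
  forall f : H,
    (`| gf_sum ipH ipK (dual_space ipH ipK W Lam v) (dual_op ipH ipK W Lam v) v f
        - gf_sum ipH ipK (dual_space ipH ipK V Gam v) (dual_op ipH ipK V Gam v) v f |
       <= ((D / (A1 * A2)) * nrm2 ipH f)%:E)%E.
Proof.
move=> [hipH hcompH] _ hK fL fG D0 hD f.
have hipK j : is_inner_product (@ipK j) by case: (hK j).
have hQ g : `|fform ipH ipK W Lam v g - fform ipH ipK V Gam v g| <= D * nrm2 ipH g.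
  by have := hD g; rewrite (gf_sumE fL) (gf_sumE fG) -EFinB abse_EFin lee_fin.
rewrite (dual_form hipH hcompH hipK fL) (dual_form hipH hcompH hipK fG).
rewrite -EFinB abse_EFin lee_fin.
set SL := gf_op ipH ipK W Lam v; set SG := gf_op ipH ipK V Gam v.
set x := Defs.finv SL f; set y := Defs.finv SG f.
have A10 := frame_A_gt0 fL; have A20 := frame_A_gt0 fG.
have -> : Re (ipH f x) - Re (ipH f y) = Re (ipH (SG y) x) - Re (ipH (SL y) x).
  rewrite -{1}(frame_op_invK hipH hcompH hipK fG f) -/y.
  by rewrite -{1}(frame_op_invK hipH hcompH hipK fL f) -/x (frame_op_sym hipH hcompH hipK fL x).
rewrite mulrAC ler_pdivlMr ?mulr_gt0 // distrC.
(* Compare the frame operators at A2 y and A1 x, of norm at most ||f||. *)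
have := frame_ops_close hipH hcompH hipK fL fG hQ (A2%:C *: y) (A1%:C *: x).
rewrite !(frame_opZ hipH hcompH hipK fL) !(frame_opZ hipH hcompH hipK fG).
rewrite !(ripZl hipH) !(ripZr hipH) !(n2Z hipH) -!mulrBr !normrM.
rewrite (gtr0_norm A10) (gtr0_norm A20).
have := frame_inv_bound hipH hcompH hipK fL f; have := frame_inv_bound hipH hcompH hipK fG f.
have := n2_ge0 hipH f; have := normr_ge0 (Re (ipH (SL y) x) - Re (ipH (SG y) x)).
rewrite -/x -/y; set t := `|_ - _|; nra.
Qed.
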